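(* Let $n\ge1$, $s\in\{1,\dots,n\}$ and let $C\in\mathbb{R}^{n\times n}$ be symmetric positive definite. For all $t_1,t_2$ with $0<t_1\le t_2\le\lambda_{\min}(C)$, $\hat z^D(t_1)\ge\hat z^D(t_2)$.
   Context: $\lambda_{\min}(C)$ is the smallest eigenvalue of $C$. For $0\le t\le\lambda_{\min}(C)$ let $A(t)\in\mathbb{R}^{n\times n}$ be a Cholesky factor of $C-tI$ (so $C-tI=A(t)^\top A(t)$), with $i$-th column $a_i(t)$, and for $x\in[0,1]^n$ let $M_t(x)=\sum_i x_i a_i(t)a_i(t)^\top$. For $t>0$, $\hat z^D(t)=\max\{\log\det(M_t(x)+tI) : x\in[0,1]^n,\ \sum_i x_i=s\}-(n-s)\log(t)$ (natural log). *)

From HB Require Import structures.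
From mathcomp Require Import all_boot all_order all_algebra.
From mathcomp Require Import classical_sets reals exp.
Set Implicit Arguments. Unset Strict Implicit. Unset Printing Implicit Defensive.
Import Order.TTheory GRing.Theory Num.Theory.
Local Open Scope classical_set_scope.
Local Open Scope ring_scope.

Section Defs.
Variable R : realType.

Definition sym_mx n (C : 'M[R]_n) : Prop := C^T = C.
Definition posdef_mx n (C : 'M[R]_n) : Prop :=
  forall v : 'cV[R]_n, v != 0 -> 0 < (v^T *m C *m v) 0 0.

Definition is_lambda_min n (C : 'M[R]_n) (lam : R) : Prop :=
  eigenvalue C lam /\ forall mu, eigenvalue C mu -> lam <= mu.

Definition factor_of n (C : 'M[R]_n) (t : R) (A : 'M[R]_n) : Prop :=
  C - t%:M = A^T *m A.

Definition Mx n (A : 'M[R]_n) (x : 'I_n -> R) : 'M[R]_n :=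
  \sum_(i < n) x i *: (col i A *m (col i A)^T).

Definition feasible n (s : nat) (x : 'I_n -> R) : Prop :=
  (forall i, 0 <= x i <= 1) /\ \sum_(i < n) x i = s%:R.

Definition zhatD n (s : nat) (A : 'M[R]_n) (t : R) : R :=
  reals.sup [set y | exists x, feasible s x /\ y = ln (\det (Mx A x + t%:M))]
  - (n - s)%:R * ln t.
End Defs.

(* With W = diag(sqrt x), Sylvester's identity turns det(M_t(x) + tI) into
   det(W (C - tI) W + tI). For Q = W (C - t2 I) W, which is positive
   semidefinite, the matrix at t1 is Q + t2 diag(rho) with
   rho_i = x_i + (1 - x_i) t1/t2 in (0, 1]. The determinant is affine in each
   diagonal entry and nonnegative on semidefinite matrices, so
   det(Q + t2 diag rho) >= prod_i rho_i det(Q + t2 I), and concavity of ln gives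
   ln rho_i >= (1 - x_i) ln(t1/t2), which sums to (n - s) ln(t1/t2). Hence every
   objective value at t2 is dominated, after the shift, by the value at t1 for
   the same x; the suprema are finite since the entries of M_t(x) are bounded
   on the feasible box. *)

From mathcomp Require Import all_boot all_order all_algebra perm.
From mathcomp Require Import classical_sets reals exp convex interval_inference.
From mathcomp Require Import ring lra.
Set Implicit Arguments. Unset Strict Implicit. Unset Printing Implicit Defensive.
Import Order.TTheory GRing.Theory Num.Theory.
Local Open Scope classical_set_scope.
Local Open Scope ring_scope.

Section PositiveSemidefinite.
Variables (R : rcfType) (n : nat).
Implicit Types (M N : 'M[R]_n) (v : 'cV[R]_n).

Definition qform M v : R := (v^T *m M *m v) 0 0.

Definition psd_mx M := forall v, 0 <= qform M v.

Lemma qformD M N v : qform (M + N) v = qform M v + qform N v.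
Proof. by rewrite /qform mulmxDr mulmxDl mxE. Qed.

Lemma qformZ a M v : qform (a *: M) v = a * qform M v.
Proof. by rewrite /qform -scalemxAr -scalemxAl mxE. Qed.

Lemma qform1_gt0 v : v != 0 -> 0 < qform 1%:M v.
Proof.
move=> v_neq0; rewrite /qform mulmx1 mxE.
have [i vi_neq0] : exists i, v i 0 != 0.
  apply/existsP; move: v_neq0; apply: contraR; rewrite negb_exists => /forallP v0.
  by apply/eqP/matrixP => i j; rewrite (ord1 j) mxE; apply/eqP/negPn/v0.
rewrite (bigD1 i) //= mxE ltr_wpDr ?sumr_ge0 // => [j _|].
  by rewrite mxE -expr2 sqr_ge0.
by rewrite -expr2 lt_def sqr_ge0 sqrf_eq0 vi_neq0.
Qed.

Lemma psd_mxD M N : psd_mx M -> psd_mx N -> psd_mx (M + N).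
Proof. by move=> psdM psdN v; rewrite qformD addr_ge0. Qed.

Lemma psd_mxZ a M : 0 <= a -> psd_mx M -> psd_mx (a *: M).
Proof. by move=> a_ge0 psdM v; rewrite qformZ mulr_ge0. Qed.

Lemma psd_mx_gram m (B : 'M[R]_(m, n)) : psd_mx (B^T *m B).
Proof.
move=> v; rewrite /qform.
have -> : v^T *m (B^T *m B) *m v = (B *m v)^T *m (B *m v).
  by rewrite trmx_mul !mulmxA.
by rewrite mxE sumr_ge0 // => i _; rewrite !mxE -expr2 sqr_ge0.
Qed.

Lemma psd_mx_diag (d : 'rV[R]_n) : (forall i, 0 <= d 0 i) -> psd_mx (diag_mx d).
Proof.
move=> d_ge0 v; rewrite /qform mul_mx_diag mxE sumr_ge0 // => i _.
by rewrite !mxE mulrAC -expr2 mulr_ge0 ?sqr_ge0.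
Qed.

Lemma psd_mx_scalar a : 0 <= a -> psd_mx a%:M.
Proof.
move=> a_ge0; rewrite -scalemx1; apply: psd_mxZ => // v.
by rewrite -[1%:M](mulmx1 1%:M) -{1}trmx1; apply: psd_mx_gram.
Qed.

Lemma det_neq0_qform_gt0 M : (forall v, v != 0 -> 0 < qform M v) -> \det M != 0.
Proof.
move=> pdM; apply/negP => /det0P[v v_neq0 vM0].
have := pdM v^T; rewrite trmx_eq0 v_neq0 /qform trmxK vM0 mul0mx mxE.
by rewrite ltxx => /(_ isT).
Qed.

(* Along the segment from [M] to [1%:M] the determinant is a polynomial; if
   [\det M < 0] it vanishes at some point, where the matrix is positive definite. *)
Lemma psd_mx_det_ge0 M : psd_mx M -> 0 <= \det M.
Proof.
move=> psdM; rewrite leNgt; apply/negP => detM_lt0.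
pose P : 'M[{poly R}]_n := 'X *: 1%:M + (1 - 'X) *: map_mx polyC M.
have PE s : (\det P).[s] = \det (s *: 1%:M + (1 - s) *: M).
  rewrite -[LHS]/(horner_eval s (\det P)) -det_map_mx; congr (\det _).
  apply/matrixP => i j; rewrite !mxE /= horner_evalE !hornerE.
  by case: (i == j); rewrite hornerE.
have [x /andP[x_ge0 x_le1] /rootP] : exists2 x, 0 <= x <= 1 & root (\det P) x.
  apply: poly_ivt; rewrite ?ler01 // !PE subr0 subrr !scale0r !scale1r addr0 add0r.
  by rewrite det1 ler01 ltW.
rewrite PE => det_x0.
have x_gt0 : 0 < x.
  rewrite lt_def x_ge0 andbT; apply: contraTneq isT => x0.
  by move: det_x0; rewrite x0 scale0r subr0 scale1r add0r => /eqP; rewrite lt_eqF.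
move/eqP: det_x0; apply/negP.
apply: det_neq0_qform_gt0 => v v_neq0.
by rewrite qformD !qformZ ltr_pwDl ?mulr_gt0 ?qform1_gt0 ?mulr_ge0 ?subr_ge0.
Qed.

Lemma det_psd_add_scalar_gt0 M t : psd_mx M -> 0 < t -> 0 < \det (M + t%:M).
Proof.
move=> psdM t_gt0; rewrite lt_def psd_mx_det_ge0 ?andbT; last first.
  exact: psd_mxD psdM (psd_mx_scalar (ltW t_gt0)).
apply: det_neq0_qform_gt0 => v v_neq0.
by rewrite qformD -scalemx1 qformZ ltr_wpDl ?mulr_gt0 ?qform1_gt0.
Qed.

End PositiveSemidefinite.

Lemma det_mulmx_add_scalarC (F : fieldType) n (U V : 'M[F]_n) (t : F) : t != 0 ->
  \det (U *m V + t%:M) = \det (V *m U + t%:M).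
Proof.
(* Two block factorizations of [[t, -U], [V, 1]]. *)
move=> t_neq0.
have blockE_UV : block_mx 1%:M (- U) 0 1%:M *m block_mx (U *m V + t%:M) 0 V 1%:M
                 = block_mx t%:M (- U) V 1%:M.
  rewrite mulmx_block !(mul1mx, mul0mx, mulmx0, mulmx1, addr0, add0r) mulNmx.
  by rewrite addrC addKr.
have blockE_VU : block_mx 1%:M 0 (t^-1 *: V) 1%:M
                   *m block_mx t%:M (- U) 0 (1%:M + t^-1 *: (V *m U))
                 = block_mx t%:M (- U) V 1%:M.
  rewrite mulmx_block !(mul1mx, mul0mx, mulmx0, addr0, add0r).
  rewrite -scalemxAl mul_mx_scalar scalerA mulVf // scale1r mulmxN -scalemxAl.
  by rewrite addrC -addrA addrN addr0.
have := congr1 determinant blockE_UV; rewrite -blockE_VU !det_mulmx.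
rewrite !det_ublock !det_lblock !det1 !mul1r mulr1 => ->.
by rewrite det_scalar -detZ scalerDr scalerA mulfV // scale1r scalemx1 addrC.
Qed.

Section DiagonalPerturbation.
Variables (R : rcfType) (n : nat) (Q : 'M[R]_n) (c : R) (rho : 'rV[R]_n).
Hypotheses (psdQ : psd_mx Q) (c_ge0 : 0 <= c) (rho01 : forall i, 0 <= rho 0 i <= 1).

Definition diag_prefix k : 'rV[R]_n := \row_i (if (i < k)%N then rho 0 i else 1).

(* Row [k] of the right-hand matrix is the combination with weights [1 - rho_k]
   and [rho_k] of the same row with diagonal entry [0] and with entry [1]. *)
Lemma det_add_diag_prefixS k (k_lt_n : (k < n)%N) :
  rho 0 (Ordinal k_lt_n) * \det (Q + c *: diag_mx (diag_prefix k))
    <= \det (Q + c *: diag_mx (diag_prefix k.+1)).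
Proof.
set i0 := Ordinal k_lt_n.
pose d0 : 'rV[R]_n := \row_i (if i == i0 then 0 else diag_prefix k 0 i).
have row'E (d : 'rV[R]_n) : (forall i, i != i0 -> d 0 i = diag_prefix k 0 i) ->
    row' i0 (Q + c *: diag_mx d) = row' i0 (Q + c *: diag_mx (diag_prefix k)).
  by move=> dE; apply/matrixP => a b; rewrite !mxE dE ?mxE // eq_sym neq_lift.
have row'_prefixS : row' i0 (Q + c *: diag_mx (diag_prefix k.+1))
                    = row' i0 (Q + c *: diag_mx (diag_prefix k)).
  by apply: row'E => i; rewrite -val_eqE /= !mxE ltnS leq_eqVlt => /negbTE ->.
have [rho_ge0 rho_le1] := andP (rho01 i0).
rewrite (@determinant_multilinear _ _ (Q + c *: diag_mx (diag_prefix k.+1)) (Q + c *: diag_mx d0)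
           (Q + c *: diag_mx (diag_prefix k)) i0 (1 - rho 0 i0) (rho 0 i0)).
- apply: ler_wpDl => //; rewrite mulr_ge0 ?subr_ge0 // psd_mx_det_ge0 //.
  apply: psd_mxD => //; apply: psd_mxZ => //; apply: psd_mx_diag => i.
  by rewrite !mxE; case: eqP => // _; case: ifP => // _; case/andP: (rho01 i).
- apply/rowP => j; rewrite !mxE eqxx ltnSn ltnn.
  by case: (i0 == j); rewrite ?mulr1n ?mulr0n; ring.
- by rewrite row'_prefixS row'E // => i /negbTE; rewrite mxE => ->.
- by rewrite row'_prefixS.
Qed.

Lemma det_add_diag_ge_prod :
  \prod_i rho 0 i * \det (Q + c%:M) <= \det (Q + c *: diag_mx rho).
Proof.
have prefix_ge k : (k <= n)%N ->
    \prod_(i < n | (i < k)%N) rho 0 i * \det (Q + c%:M)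
      <= \det (Q + c *: diag_mx (diag_prefix k)).
  elim: k => [_|k IHk k_lt_n].
    rewrite big_pred0 => [|i]; last exact: ltn0.
    rewrite mul1r (_ : diag_mx _ = 1%:M) ?scalemx1 //.
    by apply/matrixP => i j; rewrite !mxE.
  rewrite (bigD1 (Ordinal k_lt_n)) //= -mulrA.
  rewrite (eq_bigl (fun i : 'I_n => (i < k)%N)) => [|i]; last first.
    by rewrite -val_eqE /= ltnS leq_eqVlt; case: ltngtP.
  apply: le_trans (det_add_diag_prefixS k_lt_n).
  by apply: ler_wpM2l; [case/andP: (rho01 (Ordinal k_lt_n)) | exact/IHk/ltnW].
rewrite (eq_bigl (fun i : 'I_n => (i < n)%N)) => [|i]; last by rewrite ltn_ord.
have rhoE : rho = diag_prefix n by apply/rowP => i; rewrite mxE ltn_ord.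
by rewrite [in X in _ <= X]rhoE prefix_ge.
Qed.

End DiagonalPerturbation.

Lemma ler_sum_term (R : numDomainType) (I : finType) (F : I -> R) i :
  (forall j, 0 <= F j) -> F i <= \sum_j F j.
Proof. by move=> F_ge0; rewrite (bigD1 i) //= ler_wpDr ?sumr_ge0. Qed.

Lemma normr_det_le (R : numDomainType) n (M : 'M[R]_n) K :
  (forall i j, `|M i j| <= K) -> `|\det M| <= n`!%:R * K ^+ n.
Proof.
move=> M_le; rewrite mulr_natl -card_Sn -sumr_const /determinant.
apply: le_trans (ler_norm_sum _ _ _) _; apply: ler_sum => p _.
rewrite normrM normr_sign mul1r normr_prod -[in X in _ <= X](card_ord n) -prodr_const.
by apply: ler_prod => i _; rewrite normr_ge0 M_le.
Qed.

Section RealFacts.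
Variable R : realType.

Lemma ln_le_norm (x : R) : ln x <= `|x|.
Proof.
have [x_le0|x_gt0] := leP x 0; first by rewrite ln0.
by rewrite gtr0_norm // ltW // ln_sublinear.
Qed.

Lemma ln_prod (I : finType) (f : I -> R) : (forall i, 0 < f i) ->
  ln (\prod_i f i) = \sum_i ln (f i).
Proof.
move=> f_gt0; suff [] : 0 < \prod_i f i /\ ln (\prod_i f i) = \sum_i ln (f i) by [].
apply: (big_rec2 (fun a b => 0 < b /\ ln b = a)); first by rewrite ln1.
by move=> i a b _ [b_gt0 <-]; split; [exact: mulr_gt0 | rewrite lnM ?posrE ?f_gt0].
Qed.

Lemma concave_ln1 (x r : R) : 0 <= x <= 1 -> 0 < r ->
  (1 - x) * ln r <= ln (x + (1 - x) * r).
Proof.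
move=> /andP[x_ge0 x_le1] r_gt0.
have := @concave_ln R (Itv01 x_ge0 x_le1) 1 r ltr01 r_gt0.
by rewrite !convRE /= ln1 mulr0 add0r mulr1.
Qed.

Lemma sup_le_supD (S T : set R) c : S !=set0 -> has_ubound T ->
  (forall y, S y -> exists2 z, T z & y <= z + c) -> sup S <= sup T + c.
Proof.
move=> S_neq0 T_ub S_le; apply: ge_sup => // y /S_le[z Tz /le_trans]; apply.
by rewrite lerD2r; apply: ub_le_sup.
Qed.

End RealFacts.

Section FactoredCovariance.
Variables (R : realType) (n : nat).
Implicit Types (A C M : 'M[R]_n) (x : 'I_n -> R).

Definition sqrt_diag x : 'M[R]_n := diag_mx (\row_i Num.sqrt (x i)).

Lemma sqrt_diag_sqr x : (forall i, 0 <= x i) ->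
  sqrt_diag x *m sqrt_diag x = diag_mx (\row_i x i).
Proof.
move=> x_ge0; apply/matrixP => i j; rewrite mul_diag_mx !mxE.
by case: eqVneq => [->|_]; rewrite ?mulr0n ?mulr0 // !mulr1n -expr2 sqr_sqrtr.
Qed.

Lemma Mx_diagE A x : Mx A x = A *m diag_mx (\row_i x i) *m A^T.
Proof.
apply/matrixP => i j; rewrite /Mx summxE mul_mx_diag !mxE; apply: eq_bigr => k _.
by rewrite !mxE big_ord1 !mxE; ring.
Qed.

Lemma Mx_gram A x : (forall i, 0 <= x i) ->
  Mx A x = (A *m sqrt_diag x) *m (A *m sqrt_diag x)^T.
Proof.
move=> x_ge0; rewrite Mx_diagE -sqrt_diag_sqr // trmx_mul tr_diag_mx.
by rewrite !mulmxA.
Qed.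

Lemma gram_sqrt_diag C A t x : factor_of C t A ->
  (A *m sqrt_diag x)^T *m (A *m sqrt_diag x) = sqrt_diag x *m (C - t%:M) *m sqrt_diag x.
Proof. by move=> CtE; rewrite CtE trmx_mul tr_diag_mx !mulmxA. Qed.

Lemma det_Mx_add_scalar_gt0 A x t : (forall i, 0 <= x i) -> 0 < t ->
  0 < \det (Mx A x + t%:M).
Proof.
move=> x_ge0 t_gt0; rewrite Mx_gram // -[X in X *m _]trmxK.
exact/det_psd_add_scalar_gt0/t_gt0/psd_mx_gram.
Qed.

Lemma det_Mx_add_scalar C A t x : factor_of C t A -> t != 0 -> (forall i, 0 <= x i) ->
  \det (Mx A x + t%:M) = \det (sqrt_diag x *m (C - t%:M) *m sqrt_diag x + t%:M).
Proof.
move=> CtE t_neq0 x_ge0.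
by rewrite Mx_gram // det_mulmx_add_scalarC // (gram_sqrt_diag _ CtE).
Qed.

Lemma sqrt_diag_shift M x t1 t2 : (forall i, 0 <= x i) -> t2 != 0 ->
  sqrt_diag x *m (M - t1%:M) *m sqrt_diag x + t1%:M =
  sqrt_diag x *m (M - t2%:M) *m sqrt_diag x
    + t2 *: diag_mx (\row_i (x i + (1 - x i) * (t1 / t2))).
Proof.
move=> x_ge0 t2_neq0.
have -> : M - t1%:M = (M - t2%:M) + (t2 - t1)%:M by rewrite raddfB /= addrA subrK.
rewrite mulmxDr mulmxDl mul_mx_scalar -scalemxAl sqrt_diag_sqr // -addrA.
congr (_ + _); apply/matrixP => i j; rewrite !mxE.
by case: eqVneq => _; rewrite ?mulr1n ?mulr0n ?mulr0 ?addr0 //; field.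
Qed.

Lemma feasible_sum_ln_ge s x r : (s <= n)%N -> feasible s x -> 0 < r ->
  (n - s)%:R * ln r <= \sum_i ln (x i + (1 - x i) * r).
Proof.
move=> s_le_n [x01 sum_x] r_gt0.
have <- : \sum_i (1 - x i) = (n - s)%:R by rewrite sumrB sumr_const card_ord sum_x natrB.
by rewrite big_distrl /=; apply: ler_sum => i _; apply: concave_ln1.
Qed.

Lemma ln_det_Mx_shift s C A1 A2 t1 t2 x :
  (s <= n)%N -> feasible s x -> 0 < t1 -> t1 <= t2 ->
  factor_of C t1 A1 -> factor_of C t2 A2 ->
  ln (\det (Mx A2 x + t2%:M)) + (n - s)%:R * ln (t1 / t2) <= ln (\det (Mx A1 x + t1%:M)).
Proof.
move=> s_le_n feas_x t1_gt0 t12 Ct1E Ct2E; have [x01 _] := feas_x.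
have x_ge0 i : 0 <= x i by case/andP: (x01 i).
have t2_gt0 : 0 < t2 := lt_le_trans t1_gt0 t12.
set r := t1 / t2; have r_gt0 : 0 < r by rewrite divr_gt0.
have r_le1 : r <= 1 by rewrite ler_pdivrMr // mul1r.
set W := sqrt_diag x; set Q := W *m (C - t2%:M) *m W.
pose rho := \row_i (x i + (1 - x i) * r).
have rho01 i : 0 <= rho 0 i <= 1.
  by rewrite mxE; have /andP[? ?] := x01 i; apply/andP; split; nra.
have rho_gt0 i : 0 < rho 0 i by rewrite mxE; have /andP[? ?] := x01 i; nra.
have psdQ : psd_mx Q by rewrite /Q -(gram_sqrt_diag _ Ct2E); apply: psd_mx_gram.
have det1E : \det (Mx A1 x + t1%:M) = \det (Q + t2 *: diag_mx rho).
  rewrite (det_Mx_add_scalar Ct1E (lt0r_neq0 t1_gt0) x_ge0).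
  by rewrite (sqrt_diag_shift C t1 x_ge0 (lt0r_neq0 t2_gt0)).
have det2E : \det (Mx A2 x + t2%:M) = \det (Q + t2%:M).
  by rewrite (det_Mx_add_scalar Ct2E (lt0r_neq0 t2_gt0) x_ge0).
have := det_add_diag_ge_prod psdQ (ltW t2_gt0) rho01.
rewrite -det1E -det2E -ler_ln ?posrE ?mulr_gt0 ?prodr_gt0 ?det_Mx_add_scalar_gt0 //.
rewrite lnM ?posrE ?prodr_gt0 ?det_Mx_add_scalar_gt0 // ln_prod //.
have := feasible_sum_ln_ge s_le_n feas_x r_gt0.
under [\sum_i ln (rho 0 i)]eq_bigr do rewrite mxE.
lra.
Qed.

End FactoredCovariance.

Section LogDetValues.
Variables (R : realType) (n s : nat).
Implicit Types (A : 'M[R]_n) (t : R).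

Definition logdet_values A t :=
  [set y | exists x, feasible s x /\ y = ln (\det (Mx A x + t%:M))].

Lemma zhatDE A t : zhatD s A t = sup (logdet_values A t) - (n - s)%:R * ln t.
Proof. by []. Qed.

Lemma feasible_indicator : (s <= n)%N -> feasible s (fun i : 'I_n => (i < s)%N%:R : R).
Proof.
move=> s_le_n; split=> [i|]; first by case: (i < s)%N; rewrite ?lexx ?ler01.
rewrite -(big_mkord xpredT (fun i => (i < s)%N%:R)) (@big_cat_nat _ _ _ s) //=.
rewrite (eq_big_nat _ _ (F2 := fun=> 1)) => [|i /andP[_ ->]] //.
rewrite [X in _ + X](eq_big_nat _ _ (F2 := fun=> 0)) => [|i /andP[s_le_i _]].
  by rewrite !sumr_const_nat subn0 mul0rn addr0.
by rewrite ltnNge s_le_i.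
Qed.

Lemma logdet_values_neq0 A t : (s <= n)%N -> logdet_values A t !=set0.
Proof.
move=> s_le_n; eexists; exists (fun i => (i < s)%N%:R).
by split; first exact: feasible_indicator.
Qed.

Lemma Mx_entry_le A x i j : (forall k, 0 <= x k <= 1) ->
  `|Mx A x i j| <= \sum_k `|A i k| * `|A j k|.
Proof.
move=> x01; rewrite /Mx summxE; apply: le_trans (ler_norm_sum _ _ _) _.
apply: ler_sum => k _; rewrite !mxE big_ord1 !mxE !normrM.
have /andP[x_ge0 x_le1] := x01 k.
by rewrite ger0_norm //; apply: ler_piMl; rewrite ?mulr_ge0.
Qed.

Lemma logdet_values_ubound A t : 0 <= t -> has_ubound (logdet_values A t).
Proof.
move=> t_ge0; set K := \sum_i \sum_j \sum_k `|A i k| * `|A j k| + t.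
exists (n`!%:R * K ^+ n) => _ [x [[x01 _] ->]].
apply: le_trans (ln_le_norm _) (normr_det_le _) => i j.
rewrite !mxE; apply: le_trans (ler_normD _ _) _; apply: lerD.
  apply: le_trans (Mx_entry_le _ _ _ x01) _.
  apply: le_trans (ler_sum_term (F := fun j => \sum_k `|A i k| * `|A j k|) j _) _.
    by move=> ?; apply: sumr_ge0 => k _; rewrite mulr_ge0.
  apply: (ler_sum_term (F := fun i => \sum_j \sum_k `|A i k| * `|A j k|)) => ?.
  by apply: sumr_ge0 => ? _; apply: sumr_ge0 => k _; rewrite mulr_ge0.
by case: (i == j); rewrite ?mulr1n ?mulr0n ?normr0 // ger0_norm.
Qed.

End LogDetValues.

Theorem proposition3 (R : realType) (n s : nat) (C : 'M[R]_n) (lam : R)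
  (t1 t2 : R) (A1 A2 : 'M[R]_n) :
  (1 <= n)%N -> (1 <= s <= n)%N ->
  sym_mx C -> posdef_mx C -> is_lambda_min C lam ->
  0 < t1 -> t1 <= t2 -> t2 <= lam ->
  factor_of C t1 A1 -> factor_of C t2 A2 ->
  zhatD s A2 t2 <= zhatD s A1 t1.
Proof.
(* The spectral hypotheses only guarantee that the factors exist. *)
move=> _ /andP[_ s_le_n] _ _ _ t1_gt0 t12 _ Ct1E Ct2E.
have t2_gt0 : 0 < t2 := lt_le_trans t1_gt0 t12.
rewrite !zhatDE.
suff : sup (logdet_values s A2 t2) <= sup (logdet_values s A1 t1) + (n - s)%:R * (ln t2 - ln t1).
  lra.
apply: sup_le_supD; [exact: logdet_values_neq0 | exact/logdet_values_ubound/ltW |].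
move=> _ [x [feas_x ->]]; exists (ln (\det (Mx A1 x + t1%:M))); first by exists x.
have := ln_det_Mx_shift s_le_n feas_x t1_gt0 t12 Ct1E Ct2E.
rewrite ln_div ?posrE //; lra.
Qed.
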